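(* Let $\nu>0$ and $L_1,L_2>0$. For every $\gamma>\nu+1/2$ and every $Q>0$ with \[ Q\leq L_1^2\Big(\sum_{k\geq1}k^{2(\nu-\gamma)}\Big)^{-1}, \] one has \[ \tilde W(\gamma,Q)\cap\{f\in L_\infty(\mathbb{T}):\|f\|_\infty\geq L_2\}\subset\Lambda_\nu(L_1,L_2). \]
   Context: Let $\varphi_1\equiv1$, $\varphi_{2k}(x)=\sqrt2\cos(kx)$, $\varphi_{2k+1}(x)=\sqrt2\sin(kx)$ ($k\geq1$), orthonormal in $L_2$ of the uniform law on $[0,2\pi]$ with inner product $\langle f,g\rangle=\frac1{2\pi}\int_0^{2\pi}fg$; for a $2\pi$-periodic $f$ set $\beta_k(f)=\langle f,\varphi_k\rangle$. $L_2(\mathbb{T})$, $L_\infty(\mathbb{T})$ denote the corresponding spaces of $2\pi$-periodic functions. For $\gamma,Q>0$, $\tilde W(\gamma,Q)=\{f\in L_2(\mathbb{T}) : f=\sum_{k\geq1}\beta_k\varphi_k,\ \sum_{k\geq1}k^{2\gamma}\beta_k^2\leq Q\}$. For $\nu,L_1,L_2>0$, $\Lambda_\nu(L_1,L_2)=\{f\in L_\infty(\mathbb{T}):\sum_{k\geq1}k^\nu|\beta_k(f)|\leq L_1 \text{ and } \|f\|_\infty\geq L_2\}$. *)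

From HB Require Import structures.
From mathcomp Require Import all_boot all_order all_algebra.
From mathcomp Require Import all_classical all_reals all_analysis.
From mathcomp Require Import ess_sup_inf.
Set Implicit Arguments. Unset Strict Implicit. Unset Printing Implicit Defensive.
Import Order.TTheory GRing.Theory Num.Theory.
Import numFieldNormedType.Exports.
Local Open Scope classical_set_scope.
Local Open Scope ring_scope.

Section Defs.
Variable R : realType.
Local Notation mu := (@lebesgue_measure R).

Definition I02pi : set R := [set x : R | (0 <= x <= 2 * pi)%R].

(* phi_1 = 1, phi_{2k} = sqrt 2 cos(kx), phi_{2k+1} = sqrt 2 sin(kx); phi_0 unused *)
Definition phi (k : nat) (x : R) : R :=
  if k == 1%N then 1
  else if odd k then Num.sqrt 2 * sin ((k./2)%:R * x)
  else Num.sqrt 2 * cos ((k./2)%:R * x).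

Definition periodic2pi (f : R -> R) : Prop := forall x, f (x + 2 * pi) = f x.

Definition beta (f : R -> R) (k : nat) : R :=
  (2 * pi)^-1 * Rintegral mu I02pi (fun x => f x * phi k x).

Definition supnorm (f : R -> R) : \bar R :=
  ess_sup mu (fun x => (`|f x|)%:E).

Definition L2T (f : R -> R) : Prop :=
  [/\ periodic2pi f, measurable_fun setT f &
      (\int[mu]_(x in I02pi) ((f x) ^+ 2)%:E < +oo)%E].

Definition LinfT (f : R -> R) : Prop :=
  [/\ periodic2pi f, measurable_fun setT f & (supnorm f < +oo)%E].

Definition Wtilde (gamma Q : R) (f : R -> R) : Prop :=
  [/\ L2T f,
      (* f = sum_{k>=1} beta_k phi_k in L_2 *)
      (fun n : nat => \int[mu]_(x in I02pi)
          ((f x - \sum_(1 <= k < n) beta f k * phi k x) ^+ 2)%:E)%E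
        @ \oo --> 0%E &
      (\sum_(1 <= k <oo) ((k%:R `^ (2 * gamma)) * (beta f k) ^+ 2)%:E <= Q%:E)%E].

Definition Lambda (nu L1 L2 : R) (f : R -> R) : Prop :=
  [/\ LinfT f,
      (\sum_(1 <= k <oo) ((k%:R `^ nu) * `|beta f k|)%:E <= L1%:E)%E &
      (L2%:E <= supnorm f)%E].

Definition zeta_sum (nu gamma : R) : R :=
  fine (\sum_(1 <= k <oo) ((k%:R : R) `^ (2 * (nu - gamma)))%:E)%E.

End Defs.

From HB Require Import structures.
From mathcomp Require Import all_boot all_order all_algebra.
From mathcomp Require Import all_classical all_reals all_analysis.
From mathcomp Require Import ess_sup_inf.
From mathcomp Require Import ring.
Import Order.TTheory GRing.Theory Num.Theory.
Import numFieldNormedType.Exports.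
Local Open Scope ring_scope.

(* Cauchy-Schwarz in its weighted AM-GM form: for every c > 0,
   k^nu |b_k| = k^(nu-gamma) * (k^gamma |b_k|) <= c/2 k^(2(nu-gamma)) + 1/(2c) k^(2gamma) b_k^2.
   Summing over k bounds sum_k k^nu |b_k| by c/2 Z + Q/(2c), where Z = sum_k k^(2(nu-gamma));
   the optimal choice c = L1/Z gives L1/2 + QZ/(2 L1) <= L1 as soon as QZ <= L1^2. *)

Lemma mulr_le_AMGM (R : realFieldType) (c a b : R) : 0 < c ->
  a * b <= c / 2 * a ^+ 2 + (2 * c)^-1 * b ^+ 2.
Proof.
move=> c_gt0.
have : 0 <= (c * a - b) ^+ 2 / (2 * c) by rewrite divr_ge0 ?sqr_ge0 ?mulr_ge0 ?ltW.
have -> : (c * a - b) ^+ 2 / (2 * c) = c / 2 * a ^+ 2 + (2 * c)^-1 * b ^+ 2 - a * b.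
  by field; rewrite gt_eqF.
by rewrite subr_ge0.
Qed.

Lemma powRM2 (R : realType) (x r : R) : 0 <= x -> x `^ (2 * r) = (x `^ r) ^+ 2.
Proof. by move=> x_ge0; rewrite mulrC powRrM -powR_mulrn ?powR_ge0. Qed.

Lemma powR_mul_le_AMGM (R : realType) (nu gamma c x b : R) :
  nu != 0 -> 0 < c -> 0 <= x ->
  x `^ nu * `|b| <=
  c / 2 * x `^ (2 * (nu - gamma)) + (2 * c)^-1 * (x `^ (2 * gamma) * b ^+ 2).
Proof.
move=> nu_neq0 c_gt0 x_ge0.
have -> : x `^ nu = x `^ (nu - gamma) * x `^ gamma by rewrite -powRD subrK // (negbTE nu_neq0).
rewrite !powRM2 // -mulrA -[b ^+ 2]real_normK ?num_real // -exprMn.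
exact: mulr_le_AMGM.
Qed.

Lemma nneseries_le_AMGM {R : realType} {u v w : nat -> R} {c : R} {N : nat} :
  0 < c -> (forall k, 0 <= u k) -> (forall k, 0 <= v k) -> (forall k, 0 <= w k) ->
  (forall k, u k <= c / 2 * v k + (2 * c)^-1 * w k) ->
  (\sum_(N <= k <oo) (u k)%:E <=
   (c / 2)%:E * \sum_(N <= k <oo) (v k)%:E
     + ((2 * c)^-1)%:E * \sum_(N <= k <oo) (w k)%:E)%E.
Proof.
move=> c_gt0 u_ge0 v_ge0 w_ge0 uvw.
have c2_ge0 : 0 <= c / 2 by rewrite divr_ge0 ?ltW.
have c2inv_ge0 : 0 <= (2 * c)^-1 by rewrite invr_ge0 mulr_ge0 ?ltW.
rewrite -!nneseriesZl; [|by move=> k _; rewrite lee_fin..].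
rewrite -nneseriesD; [|by move=> k _ _; rewrite -EFinM lee_fin mulr_ge0..].
apply: lee_nneseries => [k _ _|k _]; first by rewrite lee_fin.
by rewrite -!EFinM -EFinD lee_fin.
Qed.

Lemma AMGM_optimal (R : realFieldType) (L Q Z : R) :
  0 < L -> 0 < Z -> Q * Z <= L ^+ 2 ->
  L / Z / 2 * Z + (2 * (L / Z))^-1 * Q <= L.
Proof.
move=> L_gt0 Z_gt0 QZ_le.
have -> : L / Z / 2 * Z + (2 * (L / Z))^-1 * Q = L / 2 + Q * Z / (2 * L).
  by field; rewrite !gt_eqF.
rewrite [leRHS](_ : L = L / 2 + L ^+ 2 / (2 * L)); last by field; rewrite gt_eqF.
by rewrite lerD2l ler_pM2r // invr_gt0 mulr_gt0.
Qed.

Lemma zeta_sum_ge0 (R : realType) (nu gamma : R) : 0 <= zeta_sum nu gamma.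
Proof. by apply/fine_ge0/nneseries_ge0 => k _ _; rewrite lee_fin powR_ge0. Qed.

Lemma zeta_sumEFin (R : realType) (nu gamma : R) : zeta_sum nu gamma != 0 ->
  (\sum_(1 <= k <oo) ((k%:R : R) `^ (2 * (nu - gamma)))%:E)%E = (zeta_sum nu gamma)%:E.
Proof.
rewrite /zeta_sum; set S := (\sum_(1 <= k <oo) _)%E => S_neq0.
have S_ge0 : (0 <= S)%E by apply: nneseries_ge0 => k _ _; rewrite lee_fin powR_ge0.
by rewrite fineK //; move: S_neq0 S_ge0; case: (S) => //=; rewrite eqxx.
Qed.

Theorem proposition5 (R : realType) (nu L1 L2 : R) :
  0 < nu -> 0 < L1 -> 0 < L2 ->
  forall gamma Q : R, nu + 2^-1 < gamma -> 0 < Q ->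
  Q <= L1 ^+ 2 / zeta_sum nu gamma ->
  forall f : R -> R,
    Wtilde gamma Q f -> LinfT f -> (L2%:E <= supnorm f)%E ->
    Lambda nu L1 L2 f.
Proof.
move=> nu_gt0 L1_gt0 _ gamma Q _ Q_gt0 Q_le f [_ _ f_sobolev] fLinf f_sup.
split=> //.
have Z_neq0 : zeta_sum nu gamma != 0.
  by apply: contraTneq Q_le => ->; rewrite invr0 mulr0 -ltNge.
have Z_gt0 : 0 < zeta_sum nu gamma by rewrite lt0r Z_neq0 zeta_sum_ge0.
set Z := zeta_sum nu gamma in Q_le Z_neq0 Z_gt0.
have c_gt0 : 0 < L1 / Z by rewrite divr_gt0.
apply: le_trans (nneseries_le_AMGM (u := fun k => k%:R `^ nu * `|beta f k|)
                   (v := fun k => k%:R `^ (2 * (nu - gamma)))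
                   (w := fun k => k%:R `^ (2 * gamma) * beta f k ^+ 2) c_gt0 _ _ _ _) _.
- by move=> k; rewrite mulr_ge0 ?powR_ge0.
- by move=> k; rewrite powR_ge0.
- by move=> k; rewrite mulr_ge0 ?powR_ge0 ?sqr_ge0.
- by move=> k; apply: powR_mul_le_AMGM; rewrite // gt_eqF.
rewrite zeta_sumEFin // -EFinM.
apply: le_trans (leeD2l _ (lee_wpmul2l _ f_sobolev)) _.
  by rewrite lee_fin invr_ge0 mulr_ge0 // ltW.
rewrite -EFinM -EFinD lee_fin AMGM_optimal //.
by rewrite -ler_pdivlMr.
Qed.
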